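(* Let $R$ be a finite chain ring with maximal ideal $\mathfrak{m}$, residue field $\mathbb{F}_q$, and natural projection $\pi:R\to\mathbb{F}_q$. Let $\lambda$ be a unit of $R$ with $\pi(\lambda)\neq\pi(\lambda)^{-1}$, and let $C$ be a free $\lambda$-constacyclic code of length $n$ over $R$ with $\Psi(C)=\langle F\rangle$, where $F$ divides $x^n-\lambda$. Then $C$ is an LCD code over $R$.
   Context: A finite chain ring is a finite commutative local ring whose ideals form a chain. A linear code $C\subseteq R^n$ is $\lambda$-constacyclic if $(\lambda c_{n-1},c_0,\dots,c_{n-2})\in C$ whenever $(c_0,\dots,c_{n-1})\in C$; free means free as an $R$-module. $\Psi:R^n\to R[x]/\langle x^n-\lambda\rangle$ is $(c_0,\dots,c_{n-1})\mapsto\sum c_ix^i$. $C$ is LCD if $C\cap C^\perp=\{\mathbf{0}\}$, where $C^\perp$ is the dual under the standard inner product $\sum_j u_jc_j$. *)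

From HB Require Import structures.
From mathcomp Require Import all_boot all_order all_algebra.
Set Implicit Arguments. Unset Strict Implicit. Unset Printing Implicit Defensive.
Import GRing.Theory.
Local Open Scope ring_scope.

Definition is_ideal (R : finComUnitRingType) (I : {set R}) : Prop :=
  0 \in I /\ (forall a b, a \in I -> b \in I -> a + b \in I)
  /\ (forall r a, a \in I -> r * a \in I).

(* Local ring: the non-units are closed under addition (so they form the
   unique maximal ideal). *)
Definition is_local_ring (R : finComUnitRingType) : Prop :=
  forall a b : R, a \isn't a GRing.unit -> b \isn't a GRing.unit ->
    a + b \isn't a GRing.unit.

Definition is_chain_ring (R : finComUnitRingType) : Prop :=
  is_local_ring R /\
  forall I J : {set R}, is_ideal I -> is_ideal J -> I \subset J \/ J \subset I.

Definition is_linear_code (R : finComUnitRingType) n (C : {set 'rV[R]_n}) : Prop :=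
  0 \in C /\ (forall u v, u \in C -> v \in C -> u + v \in C)
  /\ (forall (a : R) u, u \in C -> a *: u \in C).

Definition is_free_code (R : finComUnitRingType) n (C : {set 'rV[R]_n}) : Prop :=
  exists k (B : 'M[R]_(k, n)),
    (forall c, c \in C <-> exists u : 'rV[R]_k, c = u *m B) /\
    (forall u : 'rV[R]_k, u *m B = 0 -> u = 0).

(* lambda-constacyclic shift: (c_0,...,c_{n-1}) |-> (lambda c_{n-1}, c_0, ..., c_{n-2}). *)
Definition consta_shift (R : finComUnitRingType) n (lam : R) (c : 'rV[R]_n) : 'rV[R]_n :=
  \row_(i < n) ((if val i == 0%N then lam else 1) * c 0 (ord_pred i)).

Definition is_constacyclic (R : finComUnitRingType) n (lam : R) (C : {set 'rV[R]_n}) : Prop :=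
  forall c, c \in C -> consta_shift lam c \in C.

(* Psi : R^n -> R[x]/<x^n - lambda>, with residues represented by their
   (unique) representatives of degree < n. *)
Definition Psi (R : finComUnitRingType) n (c : 'rV[R]_n) : {poly R} :=
  \sum_(i < n) c 0 i *: 'X^i.

Definition modxn (R : finComUnitRingType) n (lam : R) (p : {poly R}) : {poly R} :=
  Pdiv.Ring.rmodp p ('X^n - lam%:P).

(* Psi(C) equals the ideal <F> of R[x]/<x^n - lambda>. *)
Definition Psi_generated_by (R : finComUnitRingType) n (lam : R)
    (C : {set 'rV[R]_n}) (F : {poly R}) : Prop :=
  forall p : {poly R},
    (exists2 c, c \in C & Psi c = p) <->
    (exists g : {poly R}, p = modxn n lam (g * F)).

Definition dual_code (R : finComUnitRingType) n (C : {set 'rV[R]_n}) : {set 'rV[R]_n} :=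
  [set u : 'rV[R]_n | [forall c in C, \sum_(j < n) u 0 j * c 0 j == 0]].

Definition is_LCD (R : finComUnitRingType) n (C : {set 'rV[R]_n}) : Prop :=
  C :&: dual_code C = [set 0].

(* Reduce modulo the maximal ideal.  If c is a nonzero word of C :&: C^perp,
   some multiple of it lies in the socle of R^n; as the socle of a chain ring is
   contained in every nonzero principal ideal, and C is free, that multiple is
   a * d with d a codeword having a unit coordinate and orthogonal to C modulo
   the maximal ideal.  Over the residue field, with l the image of lam, the
   image p of d is a multiple of F of degree < n orthogonal to every
   x^i F mod x^n - l, i.e. x^n - l divides rev(p) F.  Writing x^n - l = F h,
   the reciprocal of h then divides p, and it is coprime to F because x^n - l
   and its reciprocal 1 - l x^n are coprime when l^2 <> 1.  So F rev(h), of
   degree n, divides p, whence p = 0: a contradiction. *)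

From HB Require Import structures.
From mathcomp Require Import all_boot all_order all_algebra.
From mathcomp Require Import zify ring.
Import GRing.Theory.
Local Open Scope ring_scope.
Set Implicit Arguments. Unset Strict Implicit. Unset Printing Implicit Defensive.

Definition revn (R : nzRingType) (N : nat) (q : {poly R}) : {poly R} :=
  \poly_(i < N) q`_(N.-1 - i).

Section Reversal.
Variable R : comNzRingType.
Implicit Types p q t h : {poly R}.

Lemma revnD N p q : revn N (p + q) = revn N p + revn N q.
Proof. by apply/polyP=> i; rewrite coefD !coef_poly coefD; case: ifP; rewrite ?addr0. Qed.

Lemma revnZ N c p : revn N (c *: p) = c *: revn N p.
Proof. by apply/polyP=> i; rewrite coefZ !coef_poly coefZ; case: ifP; rewrite ?mulr0. Qed.

HB.instance Definition _ N := GRing.isSemilinear.Build R {poly R} {poly R} _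
  (revn N) (revnZ N, revnD N).

Lemma revnK N p : (size p <= N)%N -> revn N (revn N p) = p.
Proof.
move=> sp; apply/polyP=> i; rewrite !coef_poly.
case: (ltnP i N) => iN; last by rewrite nth_default ?(leq_trans sp).
by rewrite ifT; [congr (_`_ _) | ]; lia.
Qed.

Lemma revnXn N k : (k < N)%N -> revn N 'X^k = 'X^(N.-1 - k) :> {poly R}.
Proof.
move=> kN; apply/polyP=> i; rewrite coef_poly !coefXn.
case: ltnP => iN; first by congr (_%:R); apply/eqP/eqP; lia.
by rewrite (_ : (i == _) = false) //; apply/negbTE; lia.
Qed.

Lemma revn_XnsubC n (c : R) : revn n.+1 ('X^n - c%:P) = 1 - c *: 'X^n.
Proof.
by rewrite -alg_polyC -(expr0 'X) linearB linearZ /= !revnXn // subn0 subnn.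
Qed.

Lemma revn_mul a b t h : (0 < a)%N -> (0 < b)%N ->
  (size t <= a)%N -> (size h <= b)%N ->
  revn (a + b).-1 (t * h) = revn a t * revn b h.
Proof.
move=> a_gt0 b_gt0 /take_poly_id <- /take_poly_id <-.
have mulZXn (c d : R) i j : (c *: 'X^i) * (d *: 'X^j) = (c * d) *: 'X^(i + j) :> {poly R}.
  by rewrite -scalerAl -scalerAr scalerA exprD.
rewrite /take_poly !poly_def !linear_sum !big_distrl linear_sum; apply: eq_bigr => i _.
rewrite !big_distrr linear_sum; apply: eq_bigr => j _ /=.
have [ia jb] := (ltn_ord i, ltn_ord j).
rewrite mulZXn !linearZ /= !revnXn //; last by lia.
by rewrite mulZXn; congr (_ *: 'X^_); lia.
Qed.

Lemma size_revn_size q : q`_0 != 0 -> size (revn (size q) q) = size q.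
Proof. by move=> q0; rewrite size_poly_eq // subnn. Qed.

End Reversal.

Lemma map_revn (R S : nzRingType) (f : {rmorphism R -> S}) N (q : {poly R}) :
  map_poly f (revn N q) = revn N (map_poly f q).
Proof.
apply/polyP=> i; rewrite coef_map /= coef_poly [RHS]coef_poly.
by case: ifP; rewrite ?coef_map ?rmorph0.
Qed.

Section FieldCase.
Variable K : fieldType.
Implicit Types p q r : {poly K}.

Lemma dvdp_revn q r N : q %| r -> (size r <= N)%N -> revn (size q) q %| revn N r.
Proof.
have [-> _ _|r0] := eqVneq r 0; first by rewrite linear0 dvdp0.
case/dvdpP=> t def_r sr; move: r0 sr; rewrite def_r mulf_eq0 negb_or => /andP[t0 q0].
rewrite size_mul // => st; rewrite -!size_poly_gt0 in t0 q0.
have [a_gt0 ta] : (0 < N.+1 - size q)%N /\ (size t <= N.+1 - size q)%N.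
  by move: (size t) (size q) t0 q0 st => x y; lia.
have -> : N = ((N.+1 - size q) + size q).-1 by move: (size q) a_gt0 => y; lia.
by rewrite revn_mul ?dvdp_mull.
Qed.

Lemma coprimep_XnsubC_revn n (c : K) : c ^+ 2 != 1 ->
  coprimep ('X^n - c%:P) (revn n.+1 ('X^n - c%:P)).
Proof.
move=> c2; rewrite revn_XnsubC -(coprimep_addl_mul c%:P).
have -> : c%:P * ('X^n - c%:P) + (1 - c *: 'X^n) = (1 - c ^+ 2)%:P.
  by rewrite polyCB polyC1 polyC_exp -mul_polyC; ring.
by rewrite -[(1 - _)%:P]alg_polyC coprimepZr ?coprimep1 // subr_eq0 eq_sym.
Qed.

Lemma constacyclic_hull_eq0 (l : K) n (F p : {poly K}) :
  l != l^-1 -> F %| 'X^n - l%:P -> (size p <= n)%N -> F %| p ->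
  'X^n - l%:P %| revn n p * F -> p = 0.
Proof.
move=> l_inv FA sp Fp Arev.
have [n0|n_gt0] := posnP n; first by apply/size_poly_leq0P; rewrite -n0.
set A := 'X^n - l%:P in FA Arev.
have l0 : l != 0 by apply: contraNneq l_inv => ->; rewrite invr0.
have l2 : l ^+ 2 != 1.
  by apply: contraNneq l_inv => l2; rewrite -[l^-1]mul1r -l2 expr2 mulrK ?unitfE.
have sA : size A = n.+1 by rewrite size_XnsubC.
have A0 : A != 0 by rewrite -size_poly_eq0 sA.
set h := A %/ F.
have Ah : A = h * F by rewrite divpK.
have [h0 F0] : h != 0 /\ F != 0 by apply/andP; rewrite -negb_or -mulf_eq0 -Ah.
have h0_neq0 : h`_0 != 0.
  apply: contraNneq l0 => h00.
  have : A`_0 = - l.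
    by rewrite /A coefB coefXn coefC eq_sym (negbTE (lt0n_neq0 n_gt0)) eqxx sub0r.
  by rewrite Ah coef0M h00 mul0r => /esym/eqP; rewrite oppr_eq0.
have hrev_p : revn (size h) h %| p.
  rewrite -(revnK sp) dvdp_revn ?size_poly //.
  by rewrite -(dvdp_mul2r _ _ F0) -Ah.
have hrev_A : revn (size h) h %| revn n.+1 A by rewrite dvdp_revn ?sA // Ah dvdp_mulr.
have cop : coprimep F (revn (size h) h).
  exact: coprimep_dvdl hrev_A (coprimep_dvdr FA (coprimep_XnsubC_revn n l2)).
have Fhrev_p : F * revn (size h) h %| p by rewrite Gauss_dvdp ?Fp.
apply/eqP; move: sp; apply: contraTT => p0; rewrite -ltnNge.
have := dvdp_leq p0 Fhrev_p; rewrite size_mul ?size_revn_size //; last first.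
  by rewrite -size_poly_eq0 size_revn_size // size_poly_eq0.
by rewrite addnC -size_mul // -Ah sA.
Qed.

End FieldCase.

Lemma exists_expr_scale_annihilated (R : pzRingType) (V : lmodType R) (x : R) (v : V) k :
  x ^+ k *: v = 0 -> v != 0 -> exists j, x ^+ j *: v != 0 /\ x *: (x ^+ j *: v) = 0.
Proof.
elim: k v => [|k IHk] v; first by rewrite expr0 scale1r => ->; rewrite eqxx.
rewrite exprSr -scalerA => xkv v0.
have [xv0|xv_neq0] := eqVneq (x *: v) 0; first by exists 0%N; rewrite scale1r.
have [j [xjv0 xxjv]] := IHk _ xkv xv_neq0.
by exists j.+1; rewrite exprSr -scalerA.
Qed.

Lemma dual_codeP (R : finComUnitRingType) n (C : {set 'rV[R]_n}) (u : 'rV[R]_n) :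
  reflect (forall c, c \in C -> \sum_(j < n) u 0 j * c 0 j = 0) (u \in dual_code C).
Proof. by rewrite inE; apply: (iffP forall_inP) => orth c /orth /eqP. Qed.

Section LocalRing.
Variable R : finComUnitRingType.
Hypothesis R_local : is_local_ring R.

Lemma local_unit1B (x : R) : x \isn't a GRing.unit -> 1 - x \is a GRing.unit.
Proof.
by move=> x_nu; apply: contraLR (unitr1 R) => /R_local/(_ x_nu); rewrite subrK.
Qed.

Lemma local_nilpotent (x : R) : x \isn't a GRing.unit -> exists k, x ^+ k = 0.
Proof.
move=> x_nu.
have /injectivePn[i [j neq_ij xij]] : ~~ injectiveb (fun i : 'I_#|R|.+1 => x ^+ i).
  by apply/injectiveP => /leq_card; rewrite card_ord ltnn.
wlog lt_ij : i j neq_ij xij / (i < j)%N.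
  move=> wlog; have [lt_ij|lt_ji|eq_ij] := ltngtP i j.
  - exact: wlog lt_ij.
  - by apply: (wlog j i); rewrite 1?eq_sym.
  - by rewrite (val_inj eq_ij) eqxx in neq_ij.
have u : 1 - x ^+ (j - i) \is a GRing.unit.
  by apply: local_unit1B; rewrite unitrX_pos ?subn_gt0.
exists i; apply: (mulIr u); rewrite mul0r mulrBr mulr1 -exprD subnKC 1?ltnW //.
by rewrite xij subrr.
Qed.

Lemma exists_scale_socle (V : lmodType R) (v : V) : v != 0 ->
  exists r, r *: v != 0 /\ forall x, x \isn't a GRing.unit -> x *: (r *: v) = 0.
Proof.
move=> v0.
suff ann_seq (s : seq R) : all (fun x => x \isn't a GRing.unit) s ->
    exists r, r *: v != 0 /\ forall x, x \in s -> x *: (r *: v) = 0.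
  have [r [rv0 ann]] := ann_seq _ (filter_all (fun x => x \isn't a GRing.unit) (enum R)).
  by exists r; split=> // x x_nu; apply: ann; rewrite mem_filter x_nu mem_enum.
elim: s => [|x s IHs] /=; first by exists 1; rewrite scale1r.
case/andP=> x_nu /IHs[r [rv0 ann]].
have [k xk] := local_nilpotent x_nu.
have [|j [xjrv0 xxjrv]] := @exists_expr_scale_annihilated _ _ x (r *: v) k _ rv0.
  by rewrite xk scale0r.
exists (x ^+ j * r); rewrite -scalerA; split=> // y /predU1P[-> //|ys].
by rewrite [y *: _]scalerA [y * _]mulrC -scalerA ann ?scaler0.
Qed.

Lemma residue_nonunit (K : fieldType) (pi : {rmorphism R -> K}) :
  (forall k, exists r, pi r = k) -> forall x, x \isn't a GRing.unit -> pi x = 0.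
Proof.
move=> pi_surj x x_nu; apply/eqP; apply: contraT => pix.
have [r pir] := pi_surj (pi x)^-1.
have /(rmorph_unit pi) : 1 - r * x \is a GRing.unit.
  by apply: local_unit1B; rewrite unitrM negb_and x_nu orbT.
by rewrite rmorphB rmorph1 rmorphM pir mulVf // subrr unitr0.
Qed.

End LocalRing.

Definition principal_ideal (R : finComUnitRingType) (a : R) : {set R} :=
  [set s * a | s : R].

Lemma principal_ideal_is_ideal (R : finComUnitRingType) (a : R) :
  is_ideal (principal_ideal a).
Proof.
split; first by apply/imsetP; exists 0; rewrite ?mul0r.
split=> [_ _ /imsetP[s _ ->] /imsetP[t _ ->]|r _ /imsetP[s _ ->]].
  by apply/imsetP; exists (s + t); rewrite ?mulrDl.
by apply/imsetP; exists (r * s); rewrite ?mulrA.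
Qed.

Section ChainRing.
Variable R : finComUnitRingType.
Hypothesis R_chain : is_chain_ring R.

Lemma socle_multiple (a y : R) : a != 0 ->
  (forall x, x \isn't a GRing.unit -> y * x = 0) -> exists s, y = s * a.
Proof.
move=> a0 y_soc.
have aRa : a \in principal_ideal a by apply/imsetP; exists 1; rewrite ?mul1r.
have yRy : y \in principal_ideal y by apply/imsetP; exists 1; rewrite ?mul1r.
case: (R_chain.2 _ _ (principal_ideal_is_ideal a) (principal_ideal_is_ideal y)).
  move/subsetP/(_ a aRa)/imsetP=> [s _ def_a].
  have [s_u|s_nu] := boolP (s \is a GRing.unit).
    by exists s^-1; rewrite def_a mulrA mulVr ?mul1r.
  by move/eqP: a0; rewrite def_a mulrC y_soc.
by move/subsetP/(_ y yRy)/imsetP=> [s _ ->]; exists s.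
Qed.

Lemma socle_row_factor m (w : 'rV[R]_m) : w != 0 ->
  (forall x, x \isn't a GRing.unit -> x *: w = 0) ->
  exists a (w' : 'rV[R]_m),
    [/\ a != 0, forall x, x \isn't a GRing.unit -> a * x = 0 & w = a *: w'].
Proof.
move=> w0 w_soc.
have entry_soc j x : x \isn't a GRing.unit -> w 0 j * x = 0.
  by move=> x_nu; have /rowP/(_ j) := w_soc x x_nu; rewrite !mxE mulrC.
have [i wi0] := rV0Pn _ w0.
have mult j : exists s, w 0 j == s * w 0 i.
  by have [s ->] := socle_multiple wi0 (entry_soc j); exists s.
exists (w 0 i), (\row_j xchoose (mult j)); split=> //; first exact: entry_soc.
by apply/rowP=> j; rewrite !mxE mulrC; exact/eqP/(xchooseP (mult j)).
Qed.

Lemma free_hull_residue n k (B : 'M[R]_(k, n)) (C : {set 'rV[R]_n}) (c : 'rV[R]_n) :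
  (forall c, c \in C <-> exists u : 'rV[R]_k, c = u *m B) ->
  (forall u : 'rV[R]_k, u *m B = 0 -> u = 0) ->
  c \in C -> c \in dual_code C -> c != 0 ->
  exists2 d, d \in C & (exists j, d 0 j \is a GRing.unit) /\
    forall c', c' \in C -> \sum_(j < n) d 0 j * c' 0 j \isn't a GRing.unit.
Proof.
move=> spanB freeB cC /dual_codeP c_orth c0.
have [u def_c] := (spanB c).1 cC.
have u0 : u != 0 by apply: contraNneq c0 => u0; rewrite def_c u0 mul0mx.
have [r [ru0 ru_soc]] := exists_scale_socle R_chain.1 u0.
have [a [w [a0 a_soc def_ru]]] := socle_row_factor ru0 ru_soc.
have awB : a *: (w *m B) = r *: c by rewrite scalemxAl -def_ru -scalemxAl def_c.
have a_ann_nonunit s : a * s = 0 -> s \isn't a GRing.unit.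
  by move=> as0; apply: contraNN a0 => s_u; rewrite -(mulrK s_u a) as0 mul0r.
exists (w *m B); first by apply/spanB; exists w.
split.
  have /rV0Pn[j] : a *: (w *m B) != 0.
    by rewrite scalemxAl -def_ru; apply: contraNneq ru0 => /freeB ->.
  by rewrite mxE => awj; exists j; apply: contraNT awj => /a_soc ->.
move=> c' c'C; apply: a_ann_nonunit.
transitivity (r * \sum_(j < n) c 0 j * c' 0 j); last by rewrite c_orth ?mulr0.
rewrite !mulr_sumr; apply: eq_bigr => j _.
have := congr1 (fun v : 'rV_n => v 0 j) awB; rewrite /= !mxE => awBj.
by rewrite mulrA awBj mulrA.
Qed.

End ChainRing.

Section CoefPsi.
Variables (R : finComUnitRingType) (n : nat).

Lemma coef_Psi (c : 'rV[R]_n) (i : 'I_n) : (Psi c)`_i = c 0 i.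
Proof. by rewrite coef_sumMXn (big_pred1 i). Qed.

Lemma size_Psi (c : 'rV[R]_n) : (size (Psi c) <= n)%N.
Proof.
apply/leq_sizeP => k nk; rewrite coef_sumMXn big1 // => j /eqP jk.
by move: (ltn_ord j); rewrite jk ltnNge nk.
Qed.

End CoefPsi.

Import Pdiv.Ring Pdiv.RingMonic.

Section ConstacyclicRing.
Variables (R : comNzRingType) (lam : R) (n : nat).
Hypothesis n_gt0 : (0 < n)%N.
Local Notation A := ('X^n - lam%:P).

Let monA : A \is monic := monicXnsubC lam n_gt0.

Lemma size_rmodp_XnsubC (q : {poly R}) : (size (rmodp q A) <= n)%N.
Proof. by rewrite -ltnS -(size_XnsubC lam n_gt0) ltn_rmodpN0 ?monic_neq0. Qed.

Lemma coef_last_rmodp (s : {poly R}) :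
  (size s <= n + n.-1)%N -> (rmodp s A)`_n.-1 = s`_n.-1.
Proof.
move=> ss; have def_s := rdivp_eq monA s; set d := rdivp s A in def_s *.
have size_d : (size d <= n.-1)%N.
  have [->|d0] := eqVneq d 0; first by rewrite size_poly0.
  have : (size (d * A)%R <= n + n.-1)%N.
    rewrite (_ : d * A = s - rmodp s A); last by apply/eqP; rewrite eq_sym subr_eq -def_s.
    rewrite (leq_trans (size_polyD _ _)) // size_polyN geq_max ss.
    by rewrite (leq_trans (size_rmodp_XnsubC s)) // leq_addr.
  by rewrite size_Mmonic // size_XnsubC //; move: (size d) => x; lia.
rewrite {2}def_s coefD mulrBr coefB coefMXn coefMC.
by rewrite ltn_predL n_gt0 [d`_n.-1]nth_default // mul0r subr0 add0r.
Qed.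

Lemma coef_last_rmodp_revn_mul (w q : {poly R}) :
  (rmodp (revn n w * q) A)`_n.-1 = \sum_(j < n) w`_j * (rmodp q A)`_j.
Proof.
rewrite -rmodp_mulmr // coef_last_rmodp; last first.
  rewrite (leq_trans (size_polyMleq _ _)) //.
  have := size_rmodp_XnsubC q; have : (size (revn n w) <= n)%N by apply: size_poly.
  by move: (size _) (size _) => x y; lia.
rewrite coefMr prednK //; apply: eq_bigr => j _; have lt_jn := ltn_ord j.
by rewrite coef_poly ifT ?subKn //; lia.
Qed.

Lemma coef_rmodp_revn_mul (w q : {poly R}) i : (i < n)%N ->
  (rmodp (revn n w * q) A)`_i = \sum_(j < n) w`_j * (rmodp ('X^(n.-1 - i) * q) A)`_j.
Proof.
move=> lt_in; set r := rmodp _ A.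
have -> : r`_i = ('X^(n.-1 - i) * r)`_n.-1.
  by rewrite coefXnM ltnNge leq_subr /= subKn //; lia.
rewrite -coef_last_rmodp; last first.
  rewrite (leq_trans (size_polyMleq _ _)) // size_polyXn.
  by have := size_rmodp_XnsubC (revn n w * q); move: (size r) => x; lia.
by rewrite rmodp_mulmr // mulrCA coef_last_rmodp_revn_mul.
Qed.

Lemma rmodp_mul_factor (F h g : {poly R}) :
  A = F * h -> exists k, rmodp (g * F) A = k * F.
Proof.
move=> AFh; exists (g - rdivp (g * F) A * h).
rewrite mulrBl -mulrA [h * F]mulrC -AFh.
by apply/eqP; rewrite eq_sym subr_eq addrC -(rdivp_eq monA).
Qed.

Lemma dvdp_map_revn_mul (K : fieldType) (f : {rmorphism R -> K}) (w q : {poly R}) :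
  (forall i, (i < n)%N -> f (\sum_(j < n) w`_j * (rmodp ('X^i * q) A)`_j) = 0) ->
  'X^n - (f lam)%:P %| revn n (map_poly f w) * map_poly f q.
Proof.
move=> orth; set p := revn n w * q.
have fr : map_poly f (rmodp p A) = 0.
  apply/polyP=> i; rewrite coef_map coef0 /=.
  have [lt_in|le_ni] := ltnP i n; first by rewrite coef_rmodp_revn_mul // orth //; lia.
  by rewrite nth_default ?rmorph0 // (leq_trans (size_rmodp_XnsubC p)).
apply/dvdpP; exists (map_poly f (rdivp p A)).
have := congr1 (map_poly f) (rdivp_eq monA p).
rewrite rmorphD rmorphM /= fr addr0 rmorphM /= map_revn.
by rewrite rmorphB /= map_polyXn map_polyC.
Qed.

End ConstacyclicRing.

Unset Implicit Arguments.

Theorem corollary4p8 (R : finComUnitRingType) (K : fieldType)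
    (pi : {rmorphism R -> K}) (n : nat) (lam : R)
    (C : {set 'rV[R]_n}) (F : {poly R}) :
  is_chain_ring R ->
  (forall k : K, exists r : R, pi r = k) ->
  lam \is a GRing.unit ->
  pi lam != (pi lam)^-1 ->
  is_linear_code C -> is_free_code C -> is_constacyclic lam C ->
  Psi_generated_by lam C F ->
  (exists h : {poly R}, 'X^n - lam%:P = F * h) ->
  is_LCD C.
Proof.
move=> R_chain pi_surj _ lam_inv _ [k [B [spanB freeB]]] _ genF [h AFh].
apply/setP=> c; rewrite in_set1 inE; apply/andP/eqP=> [[cC cD]|->]; last first.
  split; first by apply/spanB; exists 0; rewrite mul0mx.
  by apply/dual_codeP=> c' _; rewrite big1 // => j _; rewrite mxE mul0r.
apply/eqP; apply: contraT => c0.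
have [d dC [[j dj_unit] d_orth]] := free_hull_residue R_chain spanB freeB cC cD c0.
have n_gt0 : (0 < n)%N := leq_ltn_trans (leq0n j) (ltn_ord j).
have pi_d_orth c' : c' \in C -> pi (\sum_(i < n) (Psi d)`_i * (Psi c')`_i) = 0.
  move=> c'C; apply: (residue_nonunit R_chain.1 pi_surj).
  by under eq_bigr do rewrite !coef_Psi; exact: d_orth.
set p := map_poly pi (Psi d).
suff p0 : p = 0.
  by move: (rmorph_unit pi dj_unit); rewrite unitfE -coef_Psi -coef_map -/p p0 coef0 eqxx.
have FA : map_poly pi F %| 'X^n - (pi lam)%:P.
  apply/dvdpP; exists (map_poly pi h).
  by rewrite mulrC -rmorphM /= -AFh rmorphB /= map_polyXn map_polyC.
have [g def_d] := (genF (Psi d)).1 (ex_intro2 _ _ d dC erefl).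
have [q def_q] := rmodp_mul_factor n_gt0 g AFh.
apply: (constacyclic_hull_eq0 lam_inv FA).
- exact: leq_trans (size_poly _ _) (size_Psi d).
- by rewrite /p def_d /modxn def_q rmorphM dvdp_mull.
- apply: (dvdp_map_revn_mul n_gt0) => i _.
  have [c' c'C def_c'] := (genF (modxn n lam ('X^i * F))).2 (ex_intro _ _ erefl).
  by rewrite -[rmodp _ _]def_c'; apply: pi_d_orth.
Qed.
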